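(* Let $\mathcal{H}$ be a complex Hilbert space. Then $w_{\Omega}(T) = \sqrt{2}\,w(T)$ for all $T\in\mathbb{B}(\mathcal{H})$.
   Context: $\mathbb{B}(\mathcal{H})$ is the algebra of bounded linear operators on $\mathcal{H}$, $\|\cdot\|$ the usual operator norm, and $w(T)=\sup\{|\langle Tx,x\rangle|:\|x\|=1\}$ the numerical radius. Dragomir's norm is $\Omega(T)=\sup\{\|\zeta T+\eta T^*\|:\ \zeta,\eta\in\mathbb{C},\ |\zeta|^2+|\eta|^2\le 1\}$. For $A\in\mathbb{B}(\mathcal{H})$, ${\rm Re}(A)=\frac{A+A^*}{2}$, and $w_\Omega(T)=\sup_{\theta\in\mathbb{R}}\Omega\big({\rm Re}(e^{i\theta}T)\big)$. *)

From HB Require Import structures.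
From mathcomp Require Import all_boot all_order all_algebra.
From mathcomp Require Import complex.
From mathcomp Require Import all_classical all_reals trigo.
Set Implicit Arguments. Unset Strict Implicit. Unset Printing Implicit Defensive.
Import Order.TTheory GRing.Theory Num.Theory.
Local Open Scope ring_scope.
Local Open Scope complex_scope.
Local Open Scope classical_set_scope.

Definition cabs (R : realType) (z : R[i]) : R := complex.Re `|z|.

Section Hilbert.
Variables (R : realType) (V : lmodType R[i]) (ip : V -> V -> R[i]).

Definition is_inner_product : Prop :=
  [/\ (forall (a : R[i]) (x y z : V), ip (a *: x + y) z = a * ip x z + ip y z),
      (forall x y : V, ip y x = (ip x y)^*),
      (forall x : V, 0 <= ip x x) &
      (forall x : V, ip x x = 0 -> x = 0)].

Definition hnorm (x : V) : R := Num.sqrt (complex.Re (ip x x)).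

Definition hcomplete : Prop :=
  forall u : nat -> V,
    (forall e : R, 0 < e -> exists N : nat, forall m n : nat,
        (N <= m)%N -> (N <= n)%N -> hnorm (u m - u n) < e) ->
    exists l : V, forall e : R, 0 < e -> exists N : nat, forall n : nat,
        (N <= n)%N -> hnorm (u n - l) < e.

Definition is_hilbert : Prop := is_inner_product /\ hcomplete.

Definition bounded_op (T : V -> V) : Prop :=
  (forall (a : R[i]) (x y : V), T (a *: x + y) = a *: T x + T y) /\
  exists M : R, forall x : V, hnorm (T x) <= M * hnorm x.

Definition is_adjoint (T S : V -> V) : Prop :=
  forall x y : V, ip (T x) y = ip x (S y).

Definition opnorm (T : V -> V) : R :=
  sup [set hnorm (T x) | x in [set x : V | hnorm x <= 1]].

Definition numrad (T : V -> V) : R :=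
  sup [set cabs (ip (T x) x) | x in [set x : V | hnorm x = 1]].

(* Dragomir's norm Omega(T), where Tstar is the adjoint T^* of T *)
Definition Omega (T Tstar : V -> V) : R :=
  sup [set opnorm (fun x => zw.1 *: T x + zw.2 *: Tstar x)
      | zw in [set zw : R[i] * R[i] | cabs zw.1 ^+ 2 + cabs zw.2 ^+ 2 <= 1]].

Definition expi (t : R) : R[i] := (cos t +i* sin t)%C.

(* Re(e^{i t} T) = (e^{i t} T + e^{-i t} Tstar) / 2, Tstar the adjoint of T *)
Definition ReOp (T Tstar : V -> V) (t : R) : V -> V :=
  fun x => 2^-1 *: (expi t *: T x + expi (- t) *: Tstar x).

(* w_Omega(T) = sup_t Omega(Re(e^{i t} T)); Re(e^{it}T) is selfadjoint,
   so its adjoint is itself *)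
Definition wOmega (T Tstar : V -> V) : R :=
  sup [set Omega (ReOp T Tstar t) (ReOp T Tstar t) | t in [set: R]].

End Hilbert.

From Pilot Require Import Defs.
From HB Require Import structures.
From mathcomp Require Import all_boot all_order all_algebra.
From mathcomp Require Import complex.
From mathcomp Require Import all_classical all_reals trigo.
From mathcomp Require Import ring lra.
Import Order.TTheory GRing.Theory Num.Theory.

(* For a self-adjoint B and |ζ|² + |η|² <= 1 we have ζB + ηB* = (ζ + η)B with
   |ζ + η| <= √2, with equality at ζ = η = 1/√2; hence Ω(B) = √2 ‖B‖.  Since
   Re(e^{it}T) is self-adjoint, w_Ω(T) = √2 sup_t ‖Re(e^{it}T)‖, and this supremum
   is w(T).  Indeed, rotating ⟨Tx,x⟩ onto the positive reals by a suitable e^{it}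
   gives |⟨Tx,x⟩| = ⟨Re(e^{it}T)x, x⟩ <= ‖Re(e^{it}T)‖ for unit x; conversely, by
   polarization the norm of a self-adjoint operator is at most the bound c in
   |⟨Az,z⟩| <= c‖z‖², and |⟨Re(e^{it}T)z, z⟩| <= |⟨Tz,z⟩| <= w(T)‖z‖². *)

Local Open Scope ring_scope.
Local Open Scope complex_scope.
Set Implicit Arguments.
Unset Strict Implicit.

Section ComplexModulus.
Variable R : realType.
Implicit Types (z w : R[i]) (r t : R).

Lemma cabsE z : (cabs z)%:C = `|z|.
Proof. by rewrite /cabs normc_def. Qed.

Lemma cabs_ge0 z : 0 <= cabs z.
Proof. by rewrite /cabs normc_def sqrtr_ge0. Qed.

Lemma cabsM z w : cabs (z * w) = cabs z * cabs w.
Proof. by apply: complexI; rewrite rmorphM /= !cabsE normrM. Qed.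

Lemma cabsD z w : cabs (z + w) <= cabs z + cabs w.
Proof. by rewrite -lecR rmorphD /= !cabsE ler_normD. Qed.

Lemma cabsJ z : cabs z^*%C = cabs z.
Proof. by apply: complexI; rewrite !cabsE normcJ. Qed.

Lemma cabs_real r : cabs r%:C = `|r|.
Proof. by rewrite /cabs normc_def /= expr0n addr0 sqrtr_sqr. Qed.

Lemma Re_le_cabs z : `|complex.Re z| <= cabs z.
Proof. by rewrite -lecR cabsE normc_ge_Re. Qed.

Lemma cabs_expi t : cabs (expi t) = 1.
Proof. by rewrite /cabs normc_def /= cos2Dsin2 sqrtr1. Qed.

Lemma expiN t : expi (- t) = (expi t)^*%C.
Proof. by rewrite /expi cosN sinN. Qed.

Lemma expi_onto (a b : R) : a ^+ 2 + b ^+ 2 = 1 -> exists t, expi t = a +i* b.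
Proof.
move=> ab1; have a_itv : a \in `[-1, 1].
  by rewrite in_itv /= -ler_norml -sqrtr_sqr -sqrtr1 ler_sqrt // -ab1 lerDl sqr_ge0.
have sin_acos_a : sin (acos a) = `|b|.
  by rewrite sin_acos -?in_itv // -ab1 addrC addKr sqrtr_sqr.
have [b_ge0|b_lt0] := leP 0 b.
  by exists (acos a); rewrite /expi acosK // sin_acos_a ger0_norm.
by exists (- acos a); rewrite /expi cosN sinN acosK // sin_acos_a ltr0_norm ?opprK.
Qed.

Lemma rotate_to_modulus z : exists t, expi t * z = (cabs z)%:C.
Proof.
have [->|z0] := eqVneq z 0; first by exists 0; rewrite mulr0 cabsE normr0.
have nz0 : `|z| != 0 by rewrite normr_eq0.
have [t et] : exists t, expi t = z^*%C / `|z|.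
  case E : (z^*%C / `|z|) => [a b]; apply: expi_onto.
  have : `|z^*%C / `|z| | = 1 by rewrite normf_div normcJ normr_id divff.
  rewrite E normc_def /= => /complexI sqrt_ab1.
  by rewrite -[LHS]sqr_sqrtr ?addr_ge0 ?sqr_ge0 // sqrt_ab1 expr1n.
by exists t; rewrite et mulrAC [z^*%C * z]mulrC -sqr_normc expr2 mulfK // cabsE.
Qed.

End ComplexModulus.

Local Open Scope classical_set_scope.

Section SupImage.
Variables (R : realType) (T : Type) (A : set T) (f : T -> R).

Lemma sup_image_ge0 : (forall x, A x -> 0 <= f x) -> 0 <= sup [set f x | x in A].
Proof.
move=> f_ge0; have [[[_ [x Ax _]] fA_ub]|] := pselect (has_sup [set f x | x in A]).
  by apply: le_trans (f_ge0 x Ax) _; apply: ub_le_sup; last exists x.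
by move/sup_out->.
Qed.

(* [0 <= b] covers the case of an empty [A], whose image has supremum 0. *)
Lemma sup_image_le b : 0 <= b -> (forall x, A x -> f x <= b) ->
  sup [set f x | x in A] <= b.
Proof.
move=> b_ge0 f_le; have [[x Ax]|A0] := pselect (A !=set0).
  by apply: ge_sup; [exists (f x), x | move=> _ [y Ay <-]; exact: f_le].
have -> : A = set0 by apply/seteqP; split=> x // Ax; apply: A0; exists x.
by rewrite image_set0 sup0.
Qed.

Lemma le_sup_image b x : (forall y, A y -> f y <= b) -> A x ->
  f x <= sup [set f y | y in A].
Proof.
by move=> f_le Ax; apply: ub_le_sup; [exists b => _ [y Ay <-]; exact: f_le | exists x].
Qed.

End SupImage.

Lemma sup_image_scale (R : realType) (T : Type) (A : set T) (f : T -> R) k b :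
  0 <= k -> (forall x, A x -> f x <= b) ->
  sup [set k * f x | x in A] = k * sup [set f x | x in A].
Proof.
move=> k_ge0 f_le; have [[x0 Ax0]|A0] := pselect (A !=set0); last first.
  have -> : A = set0 by apply/seteqP; split=> x // Ax; apply: A0; exists x.
  by rewrite !image_set0 sup0 mulr0.
have [->|k_neq0] := eqVneq k 0.
  rewrite mul0r (eq_imagel (f' := fun=> 0)) => [|x _]; last exact: mul0r.
  rewrite (_ : [set 0 | x in A] = [set 0]) ?sup1 //.
  by apply/seteqP; split=> [_ [x _ <-] | _ ->] //; exists x0.
have k_gt0 : 0 < k by rewrite lt_neqAle eq_sym k_neq0.
have kf_le x : A x -> k * f x <= k * b by move=> Ax; rewrite ler_pM2l ?f_le.
apply/le_anti/andP; split.
  apply: ge_sup => [|_ [x Ax <-]]; first by exists (k * f x0), x0.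
  by rewrite ler_pM2l // (le_sup_image f_le).
rewrite -ler_pdivlMl //; apply: ge_sup => [|_ [x Ax <-]]; first by exists (f x0), x0.
by rewrite ler_pdivlMl // (le_sup_image (f := fun x => k * f x) kf_le).
Qed.

Section InnerProduct.
Variables (R : realType) (V : lmodType R[i]) (ip : V -> V -> R[i]).
Hypothesis ip_inner : is_inner_product ip.
Local Notation hnorm := (hnorm ip).

Lemma ip_bilinear : bilinear_for *%R (conjc \; *%R) ip.
Proof.
case: ip_inner => ipDZ ipJ _ _; split=> [z a x y|z a x y]; first exact: ipDZ.
by rewrite /= ipJ ipDZ rmorphD rmorphM /= -!ipJ.
Qed.

HB.instance Definition _ :=
  bilinear_isBilinear.Build R[i] V V R[i] *%R (conjc \; *%R) ip ip_bilinear.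

Lemma ipC x y : ip y x = (ip x y)^*%C.
Proof. by case: ip_inner. Qed.

Lemma ipZl a x y : ip (a *: x) y = a * ip x y.
Proof. exact: linearZl_LR. Qed.

Lemma ipDl x y z : ip (x + y) z = ip x z + ip y z.
Proof. exact: linearDl. Qed.

Lemma ipDr x y z : ip z (x + y) = ip z x + ip z y.
Proof. exact: linearDr. Qed.

Lemma ipZr a x y : ip x (a *: y) = a^*%C * ip x y.
Proof. exact: linearZr_LR. Qed.

Lemma Re_ipC x y : complex.Re (ip y x) = complex.Re (ip x y).
Proof. by rewrite ipC; case: (ip x y). Qed.

Lemma ip_selfE x : ip x x = (hnorm x ^+ 2)%:C.
Proof.
case: ip_inner => _ _ /(_ x) ipxx_ge0 _.
rewrite sqr_sqrtr; last by move: ipxx_ge0; rewrite lecE => /andP[].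
by rewrite [LHS]complexE ger0_Im // mulr0 addr0.
Qed.

Lemma sqr_hnorm x : hnorm x ^+ 2 = complex.Re (ip x x).
Proof. by rewrite ip_selfE. Qed.

Lemma hnorm_ge0 x : 0 <= hnorm x.
Proof. exact: sqrtr_ge0. Qed.

Lemma hnorm_eq0 x : hnorm x = 0 -> x = 0.
Proof.
by case: ip_inner => _ _ _ ipxx_eq0 hx0; apply: ipxx_eq0; rewrite ip_selfE hx0 expr0n.
Qed.

Lemma hnorm0 : hnorm 0 = 0.
Proof. by rewrite /Defs.hnorm linear0l sqrtr0. Qed.

Lemma hnorm_ipE x r : 0 <= r -> ip x x = (r ^+ 2)%:C -> hnorm x = r.
Proof. by move=> r_ge0 ipxx; rewrite /Defs.hnorm ipxx /= sqrtr_sqr ger0_norm. Qed.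

Lemma hnormZ a x : hnorm (a *: x) = cabs a * hnorm x.
Proof.
apply: hnorm_ipE; first by rewrite mulr_ge0 ?cabs_ge0 ?hnorm_ge0.
rewrite ipZl ipZr mulrA -sqr_normc -cabsE ip_selfE -!rmorphXn -rmorphM /=.
by rewrite exprMn.
Qed.

Lemma sqr_hnormD x y :
  hnorm (x + y) ^+ 2 = hnorm x ^+ 2 + hnorm y ^+ 2 + 2 * complex.Re (ip x y).
Proof.
rewrite !sqr_hnorm linearDl !linearDr /= (ipC x y).
by case: (ip x x) (ip x y) (ip y y) => [? ?] [? ?] [? ?] /=; ring.
Qed.

Lemma sqr_hnormB x y :
  hnorm (x - y) ^+ 2 = hnorm x ^+ 2 + hnorm y ^+ 2 - 2 * complex.Re (ip x y).
Proof.
rewrite !sqr_hnorm linearBl !linearBr /= (ipC x y).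
by case: (ip x x) (ip x y) (ip y y) => [? ?] [? ?] [? ?] /=; ring.
Qed.

Lemma ipZr_real x y r : ip x (r%:C *: y) = r%:C * ip x y.
Proof. by rewrite ipZr conjc_real. Qed.

Lemma ip_eq_r u v : (forall x, ip x u = ip x v) -> u = v.
Proof.
move=> uv; apply/subr0_eq/hnorm_eq0/hnorm_ipE => //.
by rewrite linearBr /= uv subrr expr0n.
Qed.

Lemma Re_ip_le x y : complex.Re (ip x y) <= hnorm x * hnorm y.
Proof.
set r := complex.Re (ip x y).
have [y0|y_neq0] := eqVneq (hnorm y) 0.
  by rewrite /r (hnorm_eq0 y0) linear0r hnorm0 mulr0.
have ny_gt0 : 0 < hnorm y ^+ 2 by rewrite exprn_gt0 // lt_neqAle eq_sym y_neq0 hnorm_ge0.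
set s := r / hnorm y ^+ 2.
have Re_sy : complex.Re (ip x (s%:C *: y)) = s * r.
  by rewrite ipZr_real /r; case: (ip x y) => a b /=; ring.
have := sqr_ge0 (hnorm (x - s%:C *: y)).
rewrite sqr_hnormB hnormZ cabs_real exprMn real_normK ?num_real // Re_sy /s.
have -> : hnorm x ^+ 2 + (r / hnorm y ^+ 2) ^+ 2 * hnorm y ^+ 2
          - 2 * (r / hnorm y ^+ 2 * r) = hnorm x ^+ 2 - r ^+ 2 / hnorm y ^+ 2.
  by field.
rewrite subr_ge0 ler_pdivrMr // -exprMn => r2_le.
have := mulr_ge0 (hnorm_ge0 x) (hnorm_ge0 y); nra.
Qed.

Lemma cabs_ip_le x y : cabs (ip x y) <= hnorm x * hnorm y.
Proof.
have [t et] := rotate_to_modulus (ip x y).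
have -> : cabs (ip x y) = complex.Re (ip (expi t *: x) y) by rewrite ipZl et.
by rewrite (le_trans (Re_ip_le _ _)) // hnormZ cabs_expi mul1r.
Qed.

Lemma exists_norming_vector v : exists2 y, hnorm y <= 1 & complex.Re (ip v y) = hnorm v.
Proof.
have [v0|v_neq0] := eqVneq (hnorm v) 0.
  by exists 0; rewrite ?hnorm0 ?ler01 // linear0r v0.
exists (((hnorm v)^-1)%:C *: v).
  by rewrite hnormZ cabs_real ger0_norm ?invr_ge0 ?hnorm_ge0 // mulVf.
by rewrite ipZr_real ip_selfE -rmorphM /= expr2 mulKf.
Qed.

End InnerProduct.

Lemma cabsD_le_sqrt2 (R : realType) (z w : R[i]) :
  cabs z ^+ 2 + cabs w ^+ 2 <= 1 -> cabs (z + w) <= Num.sqrt 2.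
Proof.
move=> zw_le1; apply: le_trans (cabsD z w) _.
have := cabs_ge0 z; have := cabs_ge0 w; set p := cabs z; set q := cabs w => q_ge0 p_ge0.
rewrite -(ger0_norm (addr_ge0 p_ge0 q_ge0)) -sqrtr_sqr ler_wsqrtr //.
by have := sqr_ge0 (p - q); nra.
Qed.

Lemma sup_cabsD_unit_ball (R : realType) :
  sup [set cabs (zw.1 + zw.2)
      | zw in [set zw : R[i] * R[i] | cabs zw.1 ^+ 2 + cabs zw.2 ^+ 2 <= 1]]
  = Num.sqrt 2.
Proof.
have s_gt0 : 0 < Num.sqrt 2 :> R by rewrite sqrtr_gt0.
set c : R[i] := (Num.sqrt 2)^-1%:C.
have cabs_c : cabs c = (Num.sqrt 2)^-1 by rewrite cabs_real ger0_norm // invr_ge0 ltW.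
apply/le_anti/andP; split.
  by apply: sup_image_le => [|zw]; [exact: sqrtr_ge0 | exact: cabsD_le_sqrt2].
apply: le_trans (le_sup_image (x := (c, c)) (fun zw => @cabsD_le_sqrt2 R zw.1 zw.2) _).
  have inv_sqrt2_twice : (Num.sqrt 2)^-1 + (Num.sqrt 2)^-1 = Num.sqrt 2 :> R.
    apply: (mulIf (lt0r_neq0 s_gt0)).
    by rewrite mulrDl mulVf ?gt_eqF // -expr2 sqr_sqrtr.
  by rewrite /= -rmorphD cabs_real inv_sqrt2_twice ger0_norm // ltW.
by rewrite /= cabs_c exprVn sqr_sqrtr //; lra.
Qed.

Section OperatorNorm.
Variables (R : realType) (V : lmodType R[i]) (ip : V -> V -> R[i]).
Hypothesis ip_inner : is_inner_product ip.
Local Notation hnorm := (hnorm ip).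
Local Notation opnorm := (opnorm ip).
Variables (B : V -> V) (K : R).
Hypothesis B_bounded : forall x, hnorm x <= 1 -> hnorm (B x) <= K.

Lemma opnorm_ge0 : 0 <= opnorm B.
Proof. by apply: sup_image_ge0 => x _; exact: hnorm_ge0. Qed.

Lemma hnorm_le_opnorm x : hnorm x <= 1 -> hnorm (B x) <= opnorm B.
Proof. exact: le_sup_image B_bounded. Qed.

Lemma opnormZ c : opnorm (fun x => c *: B x) = cabs c * opnorm B.
Proof.
rewrite /Defs.opnorm (eq_imagel (f' := fun x => cabs c * hnorm (B x))) => [|x _].
  exact: sup_image_scale (cabs_ge0 c) B_bounded.
exact: hnormZ.
Qed.

Lemma Omega_selfadjoint : Omega ip B B = Num.sqrt 2 * opnorm B.
Proof.
rewrite /Omega (eq_imagel (f' := fun zw : R[i] * R[i] => opnorm B * cabs (zw.1 + zw.2))).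
  rewrite (sup_image_scale opnorm_ge0 (fun zw => @cabsD_le_sqrt2 R zw.1 zw.2)).
  by rewrite sup_cabsD_unit_ball mulrC.
move=> [z w] _; rewrite mulrC -opnormZ.
by congr Defs.opnorm; apply/funext => x; rewrite scalerDl.
Qed.

End OperatorNorm.

Section SelfAdjoint.
Variables (R : realType) (V : lmodType R[i]) (ip : V -> V -> R[i]).
Hypothesis ip_inner : is_inner_product ip.
Local Notation hnorm := (hnorm ip).
Variable A : V -> V.
Hypothesis A_linear : linear A.
Hypothesis A_selfadjoint : forall x y, ip (A x) y = ip x (A y).

(* Canonical instances on section variables do not survive their section. *)
HB.instance Definition _ :=
  bilinear_isBilinear.Build R[i] V V R[i] *%R (conjc \; *%R) ip (ip_bilinear ip_inner).
HB.instance Definition _ := GRing.isLinear.Build R[i] V V *:%R A A_linear.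

Lemma Re_ip_polarization x y :
  complex.Re (ip (A (x + y)) (x + y)) - complex.Re (ip (A (x - y)) (x - y))
  = 4 * complex.Re (ip (A x) y).
Proof.
have Re_sym : complex.Re (ip (A y) x) = complex.Re (ip (A x) y).
  by rewrite A_selfadjoint (Re_ipC ip_inner).
rewrite raddfD raddfB /= !linearBl !linearBr !linearDl !linearDr /=; move: Re_sym.
by case: (ip (A x) x) (ip (A x) y) (ip (A y) x) (ip (A y) y) => [? ?] [? ?] [? ?] [? ?] /=; lra.
Qed.

(* For y a norming vector of A x and q z := Re <A z, z>, polarization gives
   4 ‖A x‖ = q (x + y) - q (x - y) <= c (‖x + y‖² + ‖x - y‖²) = 2 c (‖x‖² + ‖y‖²). *)
Lemma hnorm_selfadjoint_le c : 0 <= c ->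
  (forall z, `|complex.Re (ip (A z) z)| <= c * hnorm z ^+ 2) ->
  forall x, hnorm x <= 1 -> hnorm (A x) <= c.
Proof.
move=> c_ge0 quad_le x x_le1.
have [y y_le1 <-] := exists_norming_vector ip_inner (A x).
have := Re_ip_polarization x y.
have /ler_normlP[_ +] := quad_le (x + y); have /ler_normlP[+ _] := quad_le (x - y).
rewrite (sqr_hnormB ip_inner) (sqr_hnormD ip_inner).
have cx : c * hnorm x ^+ 2 <= c by rewrite ler_piMr // exprn_ile1 ?hnorm_ge0.
have cy : c * hnorm y ^+ 2 <= c by rewrite ler_piMr // exprn_ile1 ?hnorm_ge0.
lra.
Qed.

End SelfAdjoint.

Section NumericalRadius.
Variables (R : realType) (V : lmodType R[i]) (ip : V -> V -> R[i]).
Hypothesis ip_inner : is_inner_product ip.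
Local Notation hnorm := (hnorm ip).
Variables (T Tstar : V -> V).
Hypothesis T_bounded : bounded_op ip T.
Hypothesis T_adjoint : is_adjoint ip T Tstar.

HB.instance Definition _ :=
  bilinear_isBilinear.Build R[i] V V R[i] *%R (conjc \; *%R) ip (ip_bilinear ip_inner).
HB.instance Definition _ := GRing.isLinear.Build R[i] V V *:%R T (proj1 T_bounded).

Lemma adjoint_linear : linear Tstar.
Proof.
move=> a x y; apply: (ip_eq_r ip_inner) => z.
by rewrite -T_adjoint !linearDr !linearZr_LR /= -!T_adjoint.
Qed.

HB.instance Definition _ := GRing.isLinear.Build R[i] V V *:%R Tstar adjoint_linear.

Lemma numrad_ge0 : 0 <= numrad ip T.
Proof. by apply: sup_image_ge0 => x _; exact: cabs_ge0. Qed.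

Lemma cabs_quad_le_numrad z : cabs (ip (T z) z) <= numrad ip T * hnorm z ^+ 2.
Proof.
have quadZ c u : cabs (ip (T (c *: u)) (c *: u)) = cabs c ^+ 2 * cabs (ip (T u) u).
  by rewrite linearZ linearZl_LR linearZr_LR /= !cabsM cabsJ mulrA expr2.
have [/(hnorm_eq0 ip_inner)->|z_neq0] := eqVneq (hnorm z) 0.
  by rewrite linear0 linear0l /cabs normr0 /= (hnorm0 ip_inner) expr0n mulr0.
have z_gt0 : 0 < hnorm z by rewrite lt_neqAle eq_sym z_neq0 hnorm_ge0.
set u := (hnorm z)^-1%:C *: z.
have u_unit : hnorm u = 1.
  by rewrite (hnormZ ip_inner) cabs_real ger0_norm ?invr_ge0 ?hnorm_ge0 // mulVf.
have zE : z = (hnorm z)%:C *: u by rewrite scalerA -rmorphM /= mulfV // scale1r.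
rewrite {1 2}zE quadZ cabs_real ger0_norm ?hnorm_ge0 // mulrC ler_wpM2r ?sqr_ge0 //.
case: T_bounded => _ [M T_le].
have quad_le_M v : hnorm v = 1 -> cabs (ip (T v) v) <= M.
  move=> v_unit; apply: le_trans (cabs_ip_le ip_inner _ _) _.
  by rewrite v_unit mulr1 (le_trans (T_le v)) // v_unit mulr1.
exact: le_sup_image quad_le_M u_unit.
Qed.

Lemma adjointC x y : ip (Tstar x) y = ip x (T y).
Proof. by rewrite (ipC ip_inner (T y) x) T_adjoint -(ipC ip_inner). Qed.

Local Notation ReT t := (ReOp T Tstar t).

Lemma ReOp_linear t : linear (ReT t).
Proof.
move=> a x y; rewrite /ReOp [T _]linearP [Tstar _]linearP !scalerDr addrACA !scalerA.
by congr (_ + _ + _); rewrite mulrAC [2^-1 * a]mulrC.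
Qed.

Lemma ReOp_selfadjoint t x y : ip (ReT t x) y = ip x (ReT t y).
Proof.
rewrite /ReOp (ipZl ip_inner) (ipZr ip_inner) (ipDl ip_inner) (ipDr ip_inner).
rewrite !(ipZl ip_inner) !(ipZr ip_inner).
by rewrite T_adjoint adjointC expiN conjcK conjc_inv conjc_nat addrC.
Qed.

Lemma ip_ReOp_self t z : ip (ReT t z) z = (complex.Re (expi t * ip (T z) z))%:C.
Proof.
rewrite ReJ_add /ReOp (ipZl ip_inner) (ipDl ip_inner) !(ipZl ip_inner) adjointC expiN.
by rewrite (ipC ip_inner (T z) z) rmorphM mulrC.
Qed.

Lemma hnorm_ReOp_le t x : hnorm x <= 1 -> hnorm (ReT t x) <= numrad ip T.
Proof.
apply: (hnorm_selfadjoint_le ip_inner (ReOp_linear t) (ReOp_selfadjoint t) numrad_ge0).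
move=> z; rewrite ip_ReOp_self /=; apply: le_trans (Re_le_cabs _) _.
by rewrite cabsM cabs_expi mul1r cabs_quad_le_numrad.
Qed.

Lemma opnorm_ReOp_le t : opnorm ip (ReT t) <= numrad ip T.
Proof. exact: sup_image_le numrad_ge0 (hnorm_ReOp_le t). Qed.

Lemma sup_opnorm_ReOp : sup [set opnorm ip (ReT t) | t in [set: R]] = numrad ip T.
Proof.
apply/le_anti/andP; split.
  by apply: sup_image_le numrad_ge0 _ => t _; exact: opnorm_ReOp_le.
apply: sup_image_le (sup_image_ge0 _) _ => [t _|x /= x_unit].
  exact: opnorm_ge0.
have [t et] := rotate_to_modulus (ip (T x) x).
have -> : cabs (ip (T x) x) = complex.Re (ip (ReT t x) x) by rewrite ip_ReOp_self /= et.
apply: le_trans (Re_ip_le ip_inner _ _) _; rewrite x_unit mulr1.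
apply: le_trans (hnorm_le_opnorm (hnorm_ReOp_le t) _) _; first by rewrite x_unit.
exact: le_sup_image (fun t _ => opnorm_ReOp_le t) _.
Qed.

End NumericalRadius.

Theorem proposition3p1 (R : realType) (V : lmodType R[i]) (ip : V -> V -> R[i])
  (hH : is_hilbert ip) (T Tstar : V -> V)
  (hT : bounded_op ip T) (hTstar : is_adjoint ip T Tstar) :
  wOmega ip T Tstar = Num.sqrt 2 * numrad ip T.
Proof.
case: hH => ip_inner _.
have ReT_bounded t := hnorm_ReOp_le ip_inner hT hTstar t.
rewrite /wOmega (eq_imagel (fun t _ => Omega_selfadjoint ip_inner (ReT_bounded t))).
rewrite (sup_image_scale (sqrtr_ge0 2) (fun t _ => opnorm_ReOp_le ip_inner hT hTstar t)).
by rewrite sup_opnorm_ReOp.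
Qed.
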